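(* For all $n\ge 0$, the quadruples of statistics $(\operatorname{asc},\operatorname{des},\operatorname{MNA},\operatorname{MND})$ and $(\operatorname{des},\operatorname{asc},\operatorname{MND},\operatorname{MNA})$ are equidistributed on $S_n(213,312)$, i.e. $$\sum_{\pi\in S_n(213,312)} t_1^{\operatorname{asc}(\pi)}t_2^{\operatorname{des}(\pi)}t_3^{\operatorname{MNA}(\pi)}t_4^{\operatorname{MND}(\pi)}=\sum_{\pi\in S_n(213,312)} t_1^{\operatorname{des}(\pi)}t_2^{\operatorname{asc}(\pi)}t_3^{\operatorname{MND}(\pi)}t_4^{\operatorname{MNA}(\pi)}.$$
   Context: For $n\ge 0$, $S_n$ denotes the set of permutations $\pi=\pi_1\cdots\pi_n$ of $[n]=\{1,\dots,n\}$. $\pi$ avoids a pattern $\tau\in S_k$ if no subsequence $\pi_{i_1}\cdots\pi_{i_k}$ ($i_1<\dots<i_k$) satisfies $\pi_{i_a}<\pi_{i_b}\iff\tau_a<\tau_b$; $S_n(\tau,\rho)$ is the set of permutations in $S_n$ avoiding both $\tau$ and $\rho$. $\operatorname{asc}(\pi)$ (resp. $\operatorname{des}(\pi)$) is the number of $i\in[n-1]$ with $\pi_i<\pi_{i+1}$ (resp. $\pi_i>\pi_{i+1}$). $\operatorname{MNA}(\pi)$ is the maximum size of a set $I\subseteq[n-1]$ such that $\pi_i<\pi_{i+1}$ for all $i\in I$ and $|i-j|\ge 2$ for distinct $i,j\in I$; $\operatorname{MND}(\pi)$ is defined analogously with $\pi_i>\pi_{i+1}$. *)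

From mathcomp Require Import all_boot all_order all_algebra all_fingroup.
Set Implicit Arguments. Unset Strict Implicit. Unset Printing Implicit Defensive.
Import GRing.Theory.

(* Permutations of [n] are modelled as 's : 'S_n' acting on 'I_n = {0,...,n-1};
   position i (0-based) holds value s i.  All statistics and pattern notions
   only depend on relative order, so this is order-isomorphic to [n]. *)

Definition contains (n : nat) (pi : 'S_n) (tau : seq nat) : bool :=
  [exists f : {ffun 'I_(size tau) -> 'I_n},
     [forall a : 'I_(size tau), forall b : 'I_(size tau),
        (a < b)%N ==> (f a < f b)%N] &&
     [forall a : 'I_(size tau), forall b : 'I_(size tau),
        ((pi (f a) < pi (f b))%N == (nth 0 tau a < nth 0 tau b)%N)]].

Definition avoids (n : nat) (pi : 'S_n) (tau : seq nat) : bool :=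
  ~~ contains pi tau.

Definition av213_312 (n : nat) : {set 'S_n} :=
  [set pi : 'S_n | avoids pi [:: 2; 1; 3] && avoids pi [:: 3; 1; 2]].

(* i (0-based) is an ascent / descent position: i+1 < n and
   pi i < pi (i+1) (resp. >). 0-based position i corresponds to i+1 in [n-1]. *)
Definition is_asc (n : nat) (pi : 'S_n) (i : 'I_n) : bool :=
  [exists j : 'I_n, (val j == i.+1) && (pi i < pi j)%N].
Definition is_des (n : nat) (pi : 'S_n) (i : 'I_n) : bool :=
  [exists j : 'I_n, (val j == i.+1) && (pi j < pi i)%N].

Definition asc (n : nat) (pi : 'S_n) : nat := #|[set i | is_asc pi i]|.
Definition des (n : nat) (pi : 'S_n) : nat := #|[set i | is_des pi i]|.

Definition nonadjacent (n : nat) (I : {set 'I_n}) : bool :=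
  [forall i in I, forall j in I, (i != j) ==> ((i.+1 < j)%N || (j.+1 < i)%N)].

Definition MNA (n : nat) (pi : 'S_n) : nat :=
  \max_(I : {set 'I_n} | [forall i in I, is_asc pi i] && nonadjacent I) #|I|.
Definition MND (n : nat) (pi : 'S_n) : nat :=
  \max_(I : {set 'I_n} | [forall i in I, is_des pi i] && nonadjacent I) #|I|.

(* Reversal pi |-> pi_n ... pi_1 is an involution of S_n.  It exchanges the
   patterns 213 and 312, hence maps S_n(213,312) onto itself, and it turns the
   ascent at position i into a descent at position n - i, and conversely.
   Since i |-> n - i preserves non-adjacency of positions, reversal exchanges
   asc with des and MNA with MND, and reindexing the left-hand sum by it gives
   the right-hand sum. *)

From mathcomp Require Import all_boot all_order all_algebra all_fingroup.
From mathcomp Require Import zify.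
Import GRing.Theory.
Set Implicit Arguments. Unset Strict Implicit. Unset Printing Implicit Defensive.

Lemma ltn_rev_ord n (i j : 'I_n) : (rev_ord i < rev_ord j)%N = (j < i)%N.
Proof. by rewrite /= ltn_sub2lE ?ltnS. Qed.

Lemma forall_in_imset (aT rT : finType) (f : aT -> rT) (A : {set aT}) (P : pred rT) :
  [forall y in f @: A, P y] = [forall x in A, P (f x)].
Proof.
apply/forall_inP/forall_inP=> [allP x xA | allP _ /imsetP[x xA ->]].
- exact/allP/imset_f.
- exact: allP.
Qed.

Section Reversal.

Variable n : nat.
Implicit Types (pi : 'S_n) (i : 'I_n).

Definition rev_perm pi : 'S_n := (perm (@rev_ord_inj n) * pi)%g.

Lemma rev_permE pi i : rev_perm pi i = pi (rev_ord i).
Proof. by rewrite permM permE. Qed.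

Lemma rev_permK : involutive rev_perm.
Proof. by move=> pi; apply/permP => i; rewrite !rev_permE rev_ordK. Qed.

Lemma rev_perm_inj : injective rev_perm.
Proof. exact: inv_inj rev_permK. Qed.

Lemma contains_rev_perm_impl pi tau :
  contains (rev_perm pi) tau -> contains pi (rev tau).
Proof.
case/existsP=> f /andP[/forallP f_incr /forallP f_pat].
rewrite /contains size_rev; apply/existsP.
exists [ffun a => rev_ord (f (rev_ord a))]; apply/andP; split.
- apply/forallP=> a; apply/forallP=> b; apply/implyP=> lt_ab.
  rewrite !ffunE ltn_rev_ord.
  by apply/(implyP (forallP (f_incr (rev_ord b)) (rev_ord a))); rewrite ltn_rev_ord.
- apply/forallP=> a; apply/forallP=> b; rewrite !ffunE.
  rewrite !(nth_rev _ (ltn_ord _)) -!rev_permE.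
  exact: forallP (f_pat (rev_ord a)) (rev_ord b).
Qed.

Lemma contains_rev_perm pi tau : contains (rev_perm pi) tau = contains pi (rev tau).
Proof.
apply/idP/idP; first exact: contains_rev_perm_impl.
by rewrite -{1}(rev_permK pi) => /contains_rev_perm_impl; rewrite revK.
Qed.

Lemma rev_perm_av213_312 pi : (rev_perm pi \in av213_312 n) = (pi \in av213_312 n).
Proof. by rewrite !inE /avoids !contains_rev_perm andbC. Qed.

Fact rev_pos_subproof i : (if (i.+1 < n)%N then n - i.+2 else i) < n.
Proof. by case: ifP => [lt_i1n | _]; [lia | exact: ltn_ord]. Qed.

(* Positions 0 .. n-2 (those that can carry an ascent or descent) are reflected;
   the last position n-1 is fixed so that rev_pos is a bijection of 'I_n. *)
Definition rev_pos i : 'I_n := Ordinal (rev_pos_subproof i).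

Lemma rev_pos_val i : (i.+1 < n)%N -> val (rev_pos i) = n - i.+2.
Proof. by move=> lt_i1n; rewrite /= lt_i1n. Qed.

Lemma rev_pos_succ_lt i : ((rev_pos i).+1 < n)%N = (i.+1 < n)%N.
Proof. by rewrite /=; case: (ltnP i.+1 n) => lt_i1n; lia. Qed.

Lemma rev_posK : involutive rev_pos.
Proof.
move=> i; apply/val_inj; case: (boolP (i.+1 < n)%N) => [lt_i1n | /negbTE ge_i1n].
  by rewrite rev_pos_val ?rev_pos_succ_lt // rev_pos_val //=; lia.
by rewrite /= !ge_i1n.
Qed.

Lemma rev_pos_inj : injective rev_pos.
Proof. exact: inv_inj rev_posK. Qed.

Lemma step_rev_perm pi (e : rel nat) i :
  [exists j : 'I_n, (val j == i.+1) && e (rev_perm pi i) (rev_perm pi j)] =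
  [exists j : 'I_n, (val j == (rev_pos i).+1) && e (pi j) (pi (rev_pos i))].
Proof.
apply/existsP/existsP=> -[j /andP[/eqP j_succ e_ij]].
- have lt_i1n : (i.+1 < n)%N by rewrite -j_succ ltn_ord.
  have <- : rev_ord j = rev_pos i by apply/val_inj; rewrite /= j_succ lt_i1n; lia.
  exists (rev_ord i); apply/andP; split; last by rewrite -!rev_permE.
  by apply/eqP; rewrite /= j_succ; lia.
- have lt_i1n : (i.+1 < n)%N by rewrite -rev_pos_succ_lt -j_succ ltn_ord.
  have j_rev : j = rev_ord i by apply/val_inj; rewrite /= j_succ /= lt_i1n; lia.
  exists (rev_ord (rev_pos i)); apply/andP; split.
    by apply/eqP; rewrite /= lt_i1n; lia.
  by rewrite !rev_permE rev_ordK -j_rev.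
Qed.

Lemma is_asc_rev_perm pi i : is_asc (rev_perm pi) i = is_des pi (rev_pos i).
Proof. exact: step_rev_perm pi ltn i. Qed.

Lemma is_des_rev_perm pi i : is_des (rev_perm pi) i = is_asc pi (rev_pos i).
Proof. exact: step_rev_perm pi (fun x y => y < x)%N i. Qed.

Lemma exists_succ_lt i (Q : pred 'I_n) :
  [exists j : 'I_n, (val j == i.+1) && Q j] -> (i.+1 < n)%N.
Proof. by case/existsP=> j /andP[/eqP <- _]; exact: ltn_ord. Qed.

Lemma is_asc_succ_lt pi i : is_asc pi i -> (i.+1 < n)%N.
Proof. exact: exists_succ_lt. Qed.

Lemma is_des_succ_lt pi i : is_des pi i -> (i.+1 < n)%N.
Proof. exact: exists_succ_lt. Qed.

Lemma card_rev_pos (P : pred 'I_n) : #|[set i | P (rev_pos i)]| = #|[set i | P i]|.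
Proof. by rewrite -[RHS](card_preimset _ rev_pos_inj); apply: eq_card => i; rewrite !inE. Qed.

Lemma nonadjacentP (I : {set 'I_n}) :
  reflect {in I &, forall i j, i != j -> (i.+1 < j)%N || (j.+1 < i)%N} (nonadjacent I).
Proof.
apply: (iffP forall_inP) => [nadj i j iI jI | nadj i iI].
- exact: implyP (forall_inP (nadj i iI) j jI).
- by apply/forall_inP=> j jI; apply/implyP; apply: nadj.
Qed.

Lemma nonadjacent_imset_rev_pos (I : {set 'I_n}) :
  {in I, forall i, i.+1 < n}%N -> nonadjacent (rev_pos @: I) = nonadjacent I.
Proof.
move=> I_lt; apply/nonadjacentP/nonadjacentP=> nadj.
- move=> i j iI jI neq_ij.
  have := nadj _ _ (imset_f rev_pos iI) (imset_f rev_pos jI).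
  rewrite (inj_eq rev_pos_inj) !rev_pos_val ?I_lt // => /(_ neq_ij).
  by have := I_lt i iI; have := I_lt j jI; lia.
- move=> _ _ /imsetP[i iI ->] /imsetP[j jI ->]; rewrite (inj_eq rev_pos_inj) => neq_ij.
  rewrite !rev_pos_val ?I_lt //.
  by have := nadj i j iI jI neq_ij; have := I_lt i iI; have := I_lt j jI; lia.
Qed.

Lemma max_nonadjacent_rev_pos (P : pred 'I_n) :
    (forall i, P i -> i.+1 < n)%N ->
  \max_(I : {set 'I_n} | [forall i in I, P (rev_pos i)] && nonadjacent I) #|I| =
  \max_(I : {set 'I_n} | [forall i in I, P i] && nonadjacent I) #|I|.
Proof.
move=> P_lt; rewrite [RHS](reindex_inj (imset_inj rev_pos_inj)) /=.
apply: eq_big => [I | I _]; last by rewrite (card_imset _ rev_pos_inj).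
rewrite forall_in_imset; case: (boolP [forall i in I, _]) => //= /forall_inP allP.
by rewrite nonadjacent_imset_rev_pos // => i /allP /P_lt; rewrite rev_pos_succ_lt.
Qed.

Lemma asc_rev_perm pi : asc (rev_perm pi) = des pi.
Proof.
rewrite /asc /des -(card_rev_pos (is_des pi)).
by apply: eq_card => i; rewrite !inE is_asc_rev_perm.
Qed.

Lemma des_rev_perm pi : des (rev_perm pi) = asc pi.
Proof.
rewrite /asc /des -(card_rev_pos (is_asc pi)).
by apply: eq_card => i; rewrite !inE is_des_rev_perm.
Qed.

Lemma MNA_rev_perm pi : MNA (rev_perm pi) = MND pi.
Proof.
rewrite /MNA /MND -(max_nonadjacent_rev_pos (@is_des_succ_lt pi)).
by apply: eq_bigl => I; congr (_ && _); apply: eq_forallb => i; rewrite is_asc_rev_perm.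
Qed.

Lemma MND_rev_perm pi : MND (rev_perm pi) = MNA pi.
Proof.
rewrite /MNA /MND -(max_nonadjacent_rev_pos (@is_asc_succ_lt pi)).
by apply: eq_bigl => I; congr (_ && _); apply: eq_forallb => i; rewrite is_des_rev_perm.
Qed.

End Reversal.

Local Open Scope ring_scope.

Theorem theorem14 (R : comNzRingType) (n : nat) (t1 t2 t3 t4 : R) :
  \sum_(pi in av213_312 n)
     t1 ^+ asc pi * t2 ^+ des pi * t3 ^+ MNA pi * t4 ^+ MND pi =
  \sum_(pi in av213_312 n)
     t1 ^+ des pi * t2 ^+ asc pi * t3 ^+ MND pi * t4 ^+ MNA pi.
Proof.
rewrite (reindex_inj (@rev_perm_inj n)) /=.
apply: eq_big => [pi | pi _]; first exact: rev_perm_av213_312.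
by rewrite asc_rev_perm des_rev_perm MNA_rev_perm MND_rev_perm.
Qed.
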